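(* Let $0<r\le2$ and $\lambda_k\in L$. The function $\Phi^0_{-\lambda_k}$ belongs to $\mathcal C^r(X)^K$ if and only if $\lambda_k\in L_r^c$, i.e. $\lambda_k>\left(\tfrac2r-1\right)\rho$.
   Context: Setting: $X=G/H$ a split rank one semisimple symmetric space: $G$ connected semisimple linear Lie group, $\theta$ Cartan involution, $\sigma$ commuting involution, $H=(G^\sigma)_e$, $K=G^\theta$; $\mathfrak a_q=\mathbb RT$ a one-dimensional maximal abelian subspace of $\mathfrak p\cap\mathfrak q$, $a_t=\exp(tT)$ normalized so the positive root $\alpha$ of $\Sigma(\mathfrak a_q,\mathfrak g)$ satisfies $\alpha(T)=1$; every element of $G$ is of the form $ka_th$; $x_0=eH$. With $\mathfrak g^\pm=\{Y:\sigma\theta Y=\pm Y\}$, $m_1^\pm=\dim(\mathfrak g_\alpha\cap\mathfrak g^\pm)$, $m_2^\pm=\dim(\mathfrak g_{2\alpha}\cap\mathfrak g^\pm)$, $\rho=\frac12(m_1^++m_1^-+2m_2^++2m_2^-)$. Let $\lambda_k=\rho-m_1^+-m_2^+-1-2k$, $L=\{\lambda_k:k\in\mathbb N_0,\lambda_k>0\}$, $\gamma_r=(2/r-1)\rho$, $L_r^c=\{\lambda\in L:\lambda>\gamma_r\}$. For $\lambda_k\in L$, $\Phi^0_{-\lambda_k}$ is the left $K$-invariant function on $X$ with $\Phi^0_{-\lambda_k}(ka_th)=(2\cosh t)^{-\lambda_k-\rho}{}_2F_1(\frac{\rho+\lambda_k}{2},-k;1+\lambda_k;\cosh^{-2}t)$.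 $\mathcal C^r(X)^K$ is the space of left $K$-invariant smooth functions $f$ on $X$ with $\sup_{t>0}(1+t)^ne^{(2/r)\rho t}|Df(a_t\cdot x_0)|<\infty$ for all $n\in\mathbb N_0$ and all $G$-invariant differential operators $D$ on $X$. *)

From Stdlib Require Import Reals.
From Coquelicot Require Import Coquelicot.
Open Scope R_scope.

(* Multiplicities m1p = m_1^+, m1m = m_1^-, m2p = m_2^+, m2m = m_2^-. *)
Definition rho (m1p m1m m2p m2m : nat) : R :=
  (INR m1p + INR m1m + 2 * INR m2p + 2 * INR m2m) / 2.

Definition lam (m1p m1m m2p m2m k : nat) : R :=
  rho m1p m1m m2p m2m - INR m1p - INR m2p - 1 - 2 * INR k.

Definition in_L (m1p m1m m2p m2m : nat) (x : R) : Prop :=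
  exists k : nat, x = lam m1p m1m m2p m2m k /\ 0 < x.

Definition gam (m1p m1m m2p m2m : nat) (r : R) : R :=
  (2 / r - 1) * rho m1p m1m m2p m2m.

Definition in_Lrc (m1p m1m m2p m2m : nat) (r x : R) : Prop :=
  in_L m1p m1m m2p m2m x /\ gam m1p m1m m2p m2m r < x.

Fixpoint poch (a : R) (j : nat) : R :=
  match j with
  | O => 1
  | S j' => poch a j' * (a + INR j')
  end.

Definition hyp2F1 (a b c z : R) : R :=
  Series (fun j => poch a j * poch b j / (poch c j * INR (Factorial.fact j)) * z ^ j).

(* Radial profile t |-> Phi^0_{-lambda_k}(k a_t h) *)
Definition Phi0 (m1p m1m m2p m2m k : nat) (t : R) : R :=
  let l := lam m1p m1m m2p m2m k in
  let p := rho m1p m1m m2p m2m in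
  Rpower (2 * cosh t) (- l - p) *
  hyp2F1 ((p + l) / 2) (- INR k) (1 + l) (/ (cosh t) ^ 2).

(* Radial part (on left-K-invariant functions, in the coordinate t of a_t)
   of the Laplace(-Casimir) operator of X = G/H, which generates the algebra
   D(X) of G-invariant differential operators on the rank one space X.
   Density: sinh^{m1+}(t) cosh^{m1-}(t) sinh^{m2+}(2t) cosh^{m2-}(2t). *)
Definition radial_coeff (m1p m1m m2p m2m : nat) (t : R) : R :=
  INR m1p * (cosh t / sinh t) + INR m1m * (sinh t / cosh t)
  + 2 * INR m2p * (cosh (2 * t) / sinh (2 * t))
  + 2 * INR m2m * (sinh (2 * t) / cosh (2 * t)).

Definition radial_laplacian (m1p m1m m2p m2m : nat) (F : R -> R) (t : R) : R :=
  Derive_n F 2 t + radial_coeff m1p m1m m2p m2m t * Derive F t.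

(* Radial version of C^r(X)^K: smooth profile, and for every n and every
   D = Delta^j in D(X) = C[Delta],
   sup_{t>0} (1+t)^n e^{(2/r) rho t} |D f(a_t . x0)| < oo. *)
Definition in_CrK (m1p m1m m2p m2m : nat) (r : R) (F : R -> R) : Prop :=
  (forall (m : nat) (t : R), ex_derive_n F m t) /\
  forall j n : nat, exists C : R, forall t : R, 0 < t ->
    (1 + t) ^ n * exp (2 / r * rho m1p m1m m2p m2m * t)
      * Rabs (Nat.iter j (radial_laplacian m1p m1m m2p m2m) F t) <= C.

From Stdlib Require Import Reals Lra Lia List.
From Coquelicot Require Import Coquelicot.
Open Scope R_scope.

(* The hypergeometric series in [Phi0] terminates since its second parameter is [-k], so
   [Phi0 t = (2 cosh t) ^ -(lam + rho) * P (cosh t ^ -2)] for a polynomial [P] with [P 0 = 1].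
   Hence [Phi0] decays exactly like [exp (-(lam + rho) t)], and the weighted bound with [n = 1]
   and [D = 1] already forces [lam + rho > (2 / r) rho], which is [lam > gam r].
   Conversely, in the variable [u = cosh t] the radial Laplacian maps finite sums of terms
   [c u ^ a (2 u ^ 2 - 1) ^ -q] with [a - 2 q <= -(lam + rho)] to sums of the same kind
   (note [2 u ^ 2 - 1 = cosh 2t]), so every [Delta ^ j Phi0] is [O (exp (-(lam + rho) t))] on
   [t > 0], which absorbs [(1 + t) ^ n exp ((2 / r) rho t)].  Smoothness holds because [Phi0]
   is a sum of terms [c sinh ^ q t cosh ^ a t], a family closed under differentiation. *)

Lemma exp_le_compat x y : x <= y -> exp x <= exp y.
Proof. intros [H | ->]; [left; apply exp_increasing; exact H | lra]. Qed.

Lemma cosh_pos t : 0 < cosh t.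
Proof. unfold cosh. generalize (exp_pos t) (exp_pos (- t)); lra. Qed.

Lemma cosh_ge_1 t : 1 <= cosh t.
Proof.
  unfold cosh. rewrite exp_Ropp.
  assert (Hx : 0 < exp t) by apply exp_pos.
  assert (E : exp t + / exp t - 2 = (exp t - 1) ^ 2 / exp t) by (field; lra).
  assert (0 <= (exp t - 1) ^ 2 / exp t)
    by (apply Rdiv_le_0_compat; [apply pow2_ge_0 | exact Hx]).
  lra.
Qed.

Lemma sinh_pos t : 0 < t -> 0 < sinh t.
Proof. intros Ht. rewrite <- sinh_0. apply sinh_lt, Ht. Qed.

Lemma sinh_sq t : sinh t ^ 2 = cosh t ^ 2 - 1.
Proof.
  unfold sinh, cosh. rewrite exp_Ropp.
  assert (0 < exp t) by apply exp_pos. field. lra.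
Qed.

Lemma cosh_double t : cosh (2 * t) = 2 * cosh t ^ 2 - 1.
Proof.
  unfold cosh. replace (- (2 * t)) with (- t + - t) by ring.
  replace (2 * t) with (t + t) by ring. rewrite !exp_plus, !exp_Ropp.
  assert (0 < exp t) by apply exp_pos. field. lra.
Qed.

Lemma sinh_double t : sinh (2 * t) = 2 * sinh t * cosh t.
Proof.
  unfold sinh, cosh. replace (- (2 * t)) with (- t + - t) by ring.
  replace (2 * t) with (t + t) by ring. rewrite !exp_plus, !exp_Ropp.
  assert (0 < exp t) by apply exp_pos. field. lra.
Qed.

Lemma exp_half_le_cosh t : exp t / 2 <= cosh t.
Proof. unfold cosh. generalize (exp_pos (- t)); lra. Qed.

Lemma cosh_le_exp t : 0 <= t -> cosh t <= exp t.
Proof.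
  intros Ht. unfold cosh.
  assert (exp (- t) <= exp t) by (apply exp_le_compat; lra). lra.
Qed.

Lemma Rpower_cosh_neg_le s t : 0 <= s ->
  Rpower (cosh t) (- s) <= Rpower 2 s * exp (- s * t).
Proof.
  intros Hs. unfold Rpower. rewrite <- exp_plus. apply exp_le_compat.
  assert (Hln : t - ln 2 <= ln (cosh t)).
  { replace (t - ln 2) with (ln (exp t / 2)).
    - apply ln_le; [generalize (exp_pos t); lra | apply exp_half_le_cosh].
    - unfold Rdiv. rewrite ln_mult, ln_exp, ln_Rinv; try lra; apply exp_pos. }
  nra.
Qed.

Lemma Rpower_cosh_neg_ge s t : 0 <= s -> 0 <= t ->
  exp (- s * t) <= Rpower (cosh t) (- s).
Proof.
  intros Hs Ht. unfold Rpower. apply exp_le_compat.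
  assert (ln (cosh t) <= t).
  { rewrite <- (ln_exp t) at 2. apply ln_le; [apply cosh_pos | apply cosh_le_exp, Ht]. }
  nra.
Qed.

Lemma inv_cosh_sq_le t : 0 <= t -> / cosh t ^ 2 <= 2 / (1 + t).
Proof.
  intros Ht.
  assert (H1 := cosh_ge_1 t). assert (H2 := exp_half_le_cosh t).
  assert (H3 := exp_ineq1_le t).
  assert (cosh t <= cosh t ^ 2) by (simpl; nra).
  replace (2 / (1 + t)) with (/ ((1 + t) / 2)) by (field; lra).
  apply Rinv_le_contravar; lra.
Qed.

Lemma exp_pow x n : exp x ^ n = exp (INR n * x).
Proof.
  induction n as [|n IH].
  - simpl. rewrite Rmult_0_l, exp_0. reflexivity.
  - rewrite S_INR. simpl pow. rewrite IH, <- exp_plus. f_equal. ring.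
Qed.

Lemma pow_mul_exp_neg_bounded n d : 0 < d ->
  exists M, forall t, 0 <= t -> (1 + t) ^ n * exp (- d * t) <= M.
Proof.
  intros Hd. destruct n as [|n].
  - exists 1. intros t Ht. rewrite pow_O, Rmult_1_l, <- exp_0. apply exp_le_compat. nra.
  - assert (Hn : 0 < INR (S n)) by (apply lt_0_INR; lia).
    set (c := d / INR (S n)).
    assert (Hc : 0 < c) by (unfold c; apply Rdiv_lt_0_compat; lra).
    exists ((exp c / c) ^ S n). intros t Ht.
    assert (Hlin : 1 + t <= exp c / c * exp (c * t)).
    { assert (H := exp_ineq1_le (c * (1 + t))).
      replace (c * (1 + t)) with (c + c * t) in H by ring. rewrite exp_plus in H.
      apply Rmult_le_reg_l with c; [exact Hc|]. unfold Rdiv. field_simplify; lra. }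
    apply Rle_trans with ((exp c / c * exp (c * t)) ^ S n * exp (- d * t)).
    + apply Rmult_le_compat_r; [left; apply exp_pos|]. apply pow_incr; lra.
    + rewrite Rpow_mult_distr, Rmult_assoc, exp_pow, <- exp_plus.
      replace (INR (S n) * (c * t) + - d * t) with 0 by (unfold c; field; lra).
      rewrite exp_0. lra.
Qed.
Lemma poch_neg_nat k j : (k < j)%nat -> poch (- INR k) j = 0.
Proof.
  induction j as [|j IH]; intros H; [lia|].
  simpl. destruct (Nat.eq_dec k j) as [-> | Hne].
  - ring.
  - rewrite IH by lia. ring.
Qed.

Lemma Series_eventually_zero (a : nat -> R) K :
  (forall j, (K < j)%nat -> a j = 0) -> Series a = sum_n a K.
Proof.
  intros Ha. apply is_series_unique.
  assert (Hlim : is_lim_seq (sum_n a) (sum_n a K)).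
  { apply (is_lim_seq_ext_loc (fun _ => sum_n a K)); [|apply is_lim_seq_const].
    exists K. intros n Hn. induction Hn as [|n Hn IH]; [reflexivity|].
    rewrite sum_Sn, <- IH, Ha by lia. symmetry. apply (plus_zero_r (G:=R_AbelianGroup)). }
  exact Hlim.
Qed.

Definition hyp_coef (a b c : R) (j : nat) : R :=
  poch a j * poch b j / (poch c j * INR (Factorial.fact j)).

Lemma hyp_coef_0 a b c : hyp_coef a b c 0 = 1.
Proof. unfold hyp_coef. simpl. field. Qed.

Lemma hyp2F1_terminating a k c z :
  hyp2F1 a (- INR k) c z = sum_n (fun j => hyp_coef a (- INR k) c j * z ^ j) k.
Proof.
  apply Series_eventually_zero. intros j Hj.
  unfold hyp_coef. rewrite poch_neg_nat by exact Hj. unfold Rdiv. ring.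
Qed.

Lemma sum_n_Rabs_nonneg (b : nat -> R) K : 0 <= sum_n (fun j => Rabs (b j)) K.
Proof.
  induction K as [|K IH]; [rewrite sum_O; apply Rabs_pos|].
  rewrite sum_Sn. change plus with Rplus. generalize (Rabs_pos (b (S K))). lra.
Qed.

Lemma poly_sub_const_le (b : nat -> R) K y : 0 <= y <= 1 ->
  Rabs (sum_n (fun j => b j * y ^ j) K - b 0%nat) <= sum_n (fun j => Rabs (b j)) K * y.
Proof.
  intros Hy. induction K as [|K IH].
  - rewrite !sum_O. simpl. replace (b 0%nat * 1 - b 0%nat) with 0 by ring.
    rewrite Rabs_R0. apply Rmult_le_pos; [apply Rabs_pos | lra].
  - rewrite !sum_Sn. change plus with Rplus.
    replace (sum_n (fun j => b j * y ^ j) K + b (S K) * y ^ S K - b 0%nat)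
      with ((sum_n (fun j => b j * y ^ j) K - b 0%nat) + b (S K) * y ^ S K) by ring.
    eapply Rle_trans; [apply Rabs_triang|].
    rewrite Rabs_mult, (Rabs_right (y ^ S K)) by (apply Rle_ge, pow_le; lra).
    assert (HyK : y ^ S K <= y).
    { simpl. assert (y ^ K <= 1) by (rewrite <- (pow1 K); apply pow_incr; lra). nra. }
    assert (0 <= Rabs (b (S K))) by apply Rabs_pos.
    nra.
Qed.

Lemma poly_ge_half (b : nat -> R) K y : b 0%nat = 1 ->
  0 <= y -> y <= / (2 * sum_n (fun j => Rabs (b j)) K + 2) ->
  1 / 2 <= sum_n (fun j => b j * y ^ j) K.
Proof.
  intros Hb0 Hy0 Hy.
  set (B := sum_n (fun j => Rabs (b j)) K) in *.
  assert (HB : 0 <= B) by apply sum_n_Rabs_nonneg.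
  assert (Hy1 : y <= 1).
  { apply Rle_trans with (/ (2 * B + 2)); [exact Hy|].
    rewrite <- Rinv_1. apply Rinv_le_contravar; lra. }
  assert (Hdev := poly_sub_const_le b K y (conj Hy0 Hy1)). fold B in Hdev. rewrite Hb0 in Hdev.
  assert (HBy : B * y < 1 / 2).
  { apply Rle_lt_trans with (B / (2 * B + 2)).
    - unfold Rdiv. apply Rmult_le_compat_l; assumption.
    - apply Rmult_lt_reg_r with (2 * (2 * B + 2)); [lra|]. unfold Rdiv. field_simplify; lra. }
  generalize (Rle_abs (1 - sum_n (fun j => b j * y ^ j) K)).
  rewrite Rabs_minus_sym. lra.
Qed.

Record mono := Mono { mcoef : R; mexp : R; mpow : nat }.

Fixpoint eval_sum (f : mono -> R -> R) (l : list mono) (x : R) : R :=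
  match l with nil => 0 | m :: l' => f m x + eval_sum f l' x end.

Lemma eval_sum_app f l1 l2 x : eval_sum f (l1 ++ l2) x = eval_sum f l1 x + eval_sum f l2 x.
Proof. induction l1 as [|m l1 IH]; simpl; [lra | rewrite IH; lra]. Qed.

Lemma is_derive_eval_sum f (d : mono -> list mono) l x :
  (forall m, is_derive (f m) x (eval_sum f (d m) x)) ->
  is_derive (eval_sum f l) x (eval_sum f (flat_map d l) x).
Proof.
  intros Hd. induction l as [|m l IH].
  - apply (is_derive_const (K:=R_AbsRing) 0).
  - simpl flat_map. rewrite eval_sum_app.
    apply (is_derive_plus (f m) (eval_sum f l)); [apply Hd | exact IH].
Qed.

Section DerivativeClosed.
Variables (f : mono -> R -> R) (d : mono -> list mono).
Hypothesis Hd : forall m x, is_derive (f m) x (eval_sum f (d m) x).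

Lemma Derive_n_eval_sum n : forall l x,
  Derive_n (eval_sum f l) n x = eval_sum f (Nat.iter n (flat_map d) l) x.
Proof.
  induction n as [|n IH]; intros l x; [reflexivity|].
  simpl. rewrite (Derive_ext _ (eval_sum f (Nat.iter n (flat_map d) l))) by apply IH.
  apply is_derive_unique, is_derive_eval_sum. intros m; apply Hd.
Qed.

Lemma ex_derive_n_eval_sum l n x : ex_derive_n (eval_sum f l) n x.
Proof.
  destruct n as [|n]; [exact I|]. simpl.
  apply (ex_derive_ext (eval_sum f (Nat.iter n (flat_map d) l))).
  - intros y. symmetry. apply Derive_n_eval_sum.
  - eexists. apply is_derive_eval_sum. intros m; apply Hd.
Qed.

End DerivativeClosed.

Definition mono_u (m : mono) (u : R) : R :=
  mcoef m * Rpower u (mexp m) / (2 * u ^ 2 - 1) ^ mpow m.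

Notation eval_u := (eval_sum mono_u).

Definition deriv_u_mono (m : mono) : list mono :=
  Mono (mcoef m * mexp m) (mexp m - 1) (mpow m) ::
  Mono (- 4 * INR (mpow m) * mcoef m) (mexp m + 1) (S (mpow m)) :: nil.

Definition deriv_u : list mono -> list mono := flat_map deriv_u_mono.

Lemma is_derive_mono_u m u : 1 <= u -> is_derive (mono_u m) u (eval_u (deriv_u_mono m) u).
Proof.
  intros Hu. destruct m as [c a q]. unfold mono_u, deriv_u_mono, Rpower; simpl.
  assert (Hw : 0 < 2 * u ^ 2 - 1) by nra.
  auto_derive.
  { repeat split; try lra. apply pow_nonzero; lra. }
  unfold mono_u, Rpower; cbn [mcoef mexp mpow].
  replace ((a - 1) * ln u) with (a * ln u + - ln u) by ring.
  replace ((a + 1) * ln u) with (a * ln u + ln u) by ring.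
  rewrite !exp_plus, exp_Ropp, exp_ln by lra.
  replace (2 * (u * (u * 1)) + - (1)) with (2 * u ^ 2 - 1) by ring.
  replace (2 * (u * (u * 1)) - 1) with (2 * u ^ 2 - 1) by ring.
  set (W := 2 * u ^ 2 - 1) in *.
  destruct q as [|q].
  - simpl. field. lra.
  - simpl Init.Nat.pred. rewrite S_INR. simpl pow.
    assert (W ^ q <> 0) by (apply pow_nonzero; lra).
    field. repeat split; lra.
Qed.

Lemma is_derive_eval_u l u : 1 <= u -> is_derive (eval_u l) u (eval_u (deriv_u l) u).
Proof. intros Hu. apply is_derive_eval_sum. intros m. apply is_derive_mono_u, Hu. Qed.

Definition mul_mono (m1 m2 : mono) : mono :=
  Mono (mcoef m1 * mcoef m2) (mexp m1 + mexp m2) (mpow m1 + mpow m2).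

Definition mul_u (l1 l2 : list mono) : list mono :=
  flat_map (fun m => map (mul_mono m) l2) l1.

Lemma mono_u_mul m1 m2 u : 1 <= u -> mono_u (mul_mono m1 m2) u = mono_u m1 u * mono_u m2 u.
Proof.
  intros Hu. unfold mono_u, mul_mono; simpl. rewrite Rpower_plus, pow_add.
  assert (0 < 2 * u ^ 2 - 1) by nra.
  assert ((2 * u ^ 2 - 1) ^ mpow m1 <> 0) by (apply pow_nonzero; lra).
  assert ((2 * u ^ 2 - 1) ^ mpow m2 <> 0) by (apply pow_nonzero; lra).
  field; auto.
Qed.

Lemma eval_u_map_mul m l u : 1 <= u ->
  eval_u (map (mul_mono m) l) u = mono_u m u * eval_u l u.
Proof.
  intros Hu. induction l as [|m' l IH]; simpl; [ring | rewrite IH, mono_u_mul by exact Hu; ring].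
Qed.

Lemma eval_u_mul l1 l2 u : 1 <= u -> eval_u (mul_u l1 l2) u = eval_u l1 u * eval_u l2 u.
Proof.
  intros Hu. induction l1 as [|m l1 IH]; simpl; [ring|].
  rewrite eval_sum_app, IH, eval_u_map_mul by exact Hu. ring.
Qed.

Definition weight (m : mono) : R := mexp m - 2 * INR (mpow m).

Definition weight_le (B : R) (l : list mono) : Prop := List.Forall (fun m => weight m <= B) l.

Lemma weight_le_app B l1 l2 : weight_le B l1 -> weight_le B l2 -> weight_le B (l1 ++ l2).
Proof. intros; apply List.Forall_app; auto. Qed.

Lemma weight_le_trans B B' l : B <= B' -> weight_le B l -> weight_le B' l.
Proof. intros HB Hl. eapply List.Forall_impl; [|exact Hl]. simpl; intros; lra. Qed.

Lemma weight_le_deriv_u B l : weight_le B l -> weight_le (B - 1) (deriv_u l).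
Proof.
  unfold weight_le, deriv_u, weight. induction 1; simpl; [constructor|].
  constructor; [simpl; lra|]. constructor; [cbn [mexp mpow]; rewrite S_INR; lra|]. auto.
Qed.

Lemma weight_le_mul_u B1 B2 l1 l2 :
  weight_le B1 l1 -> weight_le B2 l2 -> weight_le (B1 + B2) (mul_u l1 l2).
Proof.
  unfold weight_le, mul_u, weight. intros H1 H2. induction H1; simpl; [constructor|].
  apply List.Forall_app; split; auto.
  apply List.Forall_map. eapply List.Forall_impl; [|exact H2]. intros m Hm; simpl.
  rewrite plus_INR. lra.
Qed.

Fixpoint sum_abs_coef (l : list mono) : R :=
  match l with nil => 0 | m :: l' => Rabs (mcoef m) + sum_abs_coef l' end.

Lemma sum_abs_coef_nonneg l : 0 <= sum_abs_coef l.
Proof. induction l as [|m l IH]; simpl; [lra | generalize (Rabs_pos (mcoef m)); lra]. Qed.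

Lemma mono_u_abs_le B m u : 1 <= u -> weight m <= - B ->
  Rabs (mono_u m u) <= Rabs (mcoef m) * Rpower u (- B).
Proof.
  intros Hu Hw. unfold mono_u, Rdiv.
  assert (HW : 0 < 2 * u ^ 2 - 1) by nra.
  assert (HWq : 0 < (2 * u ^ 2 - 1) ^ mpow m) by (apply pow_lt; lra).
  assert (Ha : 0 < Rpower u (mexp m)) by apply exp_pos.
  rewrite Rmult_assoc, Rabs_mult.
  apply Rmult_le_compat_l; [apply Rabs_pos|].
  rewrite Rabs_right by (apply Rle_ge, Rmult_le_pos; [lra | left; apply Rinv_0_lt_compat; lra]).
  assert (H2q : Rpower u (INR (2 * mpow m)) <= (2 * u ^ 2 - 1) ^ mpow m).
  { rewrite Rpower_pow by lra. rewrite pow_mult. apply pow_incr. nra. }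
  assert (H2q0 : 0 < Rpower u (INR (2 * mpow m))) by apply exp_pos.
  apply Rle_trans with (Rpower u (mexp m) * / Rpower u (INR (2 * mpow m))).
  - apply Rmult_le_compat_l; [lra|]. apply Rinv_le_contravar; lra.
  - rewrite <- Rpower_Ropp, <- Rpower_plus. apply Rle_Rpower; [exact Hu|].
    unfold weight in Hw. rewrite mult_INR. simpl INR. lra.
Qed.

Lemma eval_u_abs_le B l u : 1 <= u -> weight_le (- B) l ->
  Rabs (eval_u l u) <= sum_abs_coef l * Rpower u (- B).
Proof.
  intros Hu. induction 1 as [|m l Hm Hl IH]; simpl.
  - rewrite Rabs_R0. lra.
  - eapply Rle_trans; [apply Rabs_triang|].
    generalize (mono_u_abs_le B m u Hu Hm). lra.
Qed.

Section RadialLaplacian.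
Variables m1p m1m m2p m2m : nat.

(* [sinh t * radial_coeff t] written in [u = cosh t], using [sinh t ^ 2 = u ^ 2 - 1],
   [cosh (2 t) = 2 u ^ 2 - 1] and [sinh (2 t) = 2 sinh t u]. *)
Definition radial_coeff_u : list mono :=
  Mono (INR m1p) 1 0 :: Mono (INR m1m) 1 0 :: Mono (- INR m1m) (-1) 0 ::
  Mono (2 * INR m2p) 1 0 :: Mono (- INR m2p) (-1) 0 ::
  Mono (4 * INR m2m) 3 1 :: Mono (-4 * INR m2m) 1 1 :: nil.

(* For [F = G o cosh]: [F'' + a F' = u G' + (u ^ 2 - 1) G'' + (a sinh) G'] at [u = cosh t]. *)
Definition laplacian_u (l : list mono) : list mono :=
  mul_u (Mono 1 1 0 :: nil) (deriv_u l) ++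
  mul_u (Mono 1 2 0 :: Mono (-1) 0 0 :: nil) (deriv_u (deriv_u l)) ++
  mul_u radial_coeff_u (deriv_u l).

Lemma eval_radial_coeff_u t : 0 < t ->
  eval_u radial_coeff_u (cosh t) = radial_coeff m1p m1m m2p m2m t * sinh t.
Proof.
  intros Ht.
  assert (Hc := cosh_ge_1 t). assert (Hs := sinh_pos t Ht). assert (Hsq := sinh_sq t).
  unfold radial_coeff. rewrite cosh_double, sinh_double.
  unfold radial_coeff_u, mono_u; simpl eval_sum; cbn [mcoef mexp mpow].
  replace 3 with (INR 3) by (simpl; ring). replace (-1) with (- (1)) by ring.
  rewrite Rpower_Ropp, Rpower_1, Rpower_pow by lra.
  set (c := cosh t) in *; set (s := sinh t) in *.
  field_simplify; [rewrite Hsq; field; nra | repeat split; nra | repeat split; nra].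
Qed.

Lemma is_derive_eval_u_cosh l x :
  is_derive (fun y => eval_u l (cosh y)) x (sinh x * eval_u (deriv_u l) (cosh x)).
Proof.
  apply (is_derive_comp (eval_u l) cosh x).
  - apply is_derive_eval_u, cosh_ge_1.
  - apply is_derive_Reals, derivable_pt_lim_cosh.
Qed.

Lemma radial_laplacian_cosh F l : (forall x, 0 < x -> F x = eval_u l (cosh x)) ->
  forall t, 0 < t -> radial_laplacian m1p m1m m2p m2m F t = eval_u (laplacian_u l) (cosh t).
Proof.
  intros HF t Ht.
  assert (Hpos : forall x, 0 < x -> locally x (fun y => 0 < y))
    by (intros x Hx; apply (open_gt 0), Hx).
  assert (HD1 : forall x, 0 < x -> Derive F x = sinh x * eval_u (deriv_u l) (cosh x)).
  { intros x Hx. apply is_derive_unique.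
    apply (is_derive_ext_loc (fun y => eval_u l (cosh y))); [|apply is_derive_eval_u_cosh].
    generalize (Hpos x Hx). apply filter_imp. intros y Hy. rewrite HF by exact Hy. reflexivity. }
  assert (HD2 : Derive (Derive F) t =
     cosh t * eval_u (deriv_u l) (cosh t)
     + sinh t * (sinh t * eval_u (deriv_u (deriv_u l)) (cosh t))).
  { apply is_derive_unique.
    apply (is_derive_ext_loc (fun y => sinh y * eval_u (deriv_u l) (cosh y))).
    - generalize (Hpos t Ht). apply filter_imp. intros y Hy. rewrite HD1 by exact Hy. reflexivity.
    - apply (is_derive_mult sinh (fun y => eval_u (deriv_u l) (cosh y))).
      + apply is_derive_Reals, derivable_pt_lim_sinh.
      + apply is_derive_eval_u_cosh.
      + intros; apply Rmult_comm. }
  unfold radial_laplacian. simpl Derive_n.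
  change (Derive (fun x => Derive (fun y => F y) x) t) with (Derive (Derive F) t).
  rewrite HD2, HD1 by exact Ht.
  assert (Hu := cosh_ge_1 t).
  assert (E1 : eval_u (Mono 1 1 0 :: nil) (cosh t) = cosh t).
  { unfold mono_u; simpl. rewrite Rpower_1 by lra. field. }
  assert (E2 : eval_u (Mono 1 2 0 :: Mono (-1) 0 0 :: nil) (cosh t) = sinh t ^ 2).
  { unfold mono_u; cbn [eval_sum mcoef mexp mpow]. replace 2 with (INR 2) by (simpl; ring).
    rewrite Rpower_pow, Rpower_O, sinh_sq by lra. simpl. field. }
  unfold laplacian_u. rewrite !eval_sum_app, !eval_u_mul, E1, E2, eval_radial_coeff_u by lra.
  ring.
Qed.

Lemma weight_le_laplacian_u B l : weight_le B l -> weight_le B (laplacian_u l).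
Proof.
  intros Hl. unfold laplacian_u.
  assert (H1 := weight_le_deriv_u _ _ Hl). assert (H2 := weight_le_deriv_u _ _ H1).
  assert (W1 : weight_le 1 (Mono 1 1 0 :: nil))
    by (repeat constructor; unfold weight; simpl; lra).
  assert (W2 : weight_le 2 (Mono 1 2 0 :: Mono (-1) 0 0 :: nil))
    by (repeat constructor; unfold weight; simpl; lra).
  assert (W3 : weight_le 1 radial_coeff_u)
    by (unfold radial_coeff_u; repeat constructor; unfold weight; simpl; lra).
  apply weight_le_app; [|apply weight_le_app];
    (eapply weight_le_trans; [|apply weight_le_mul_u; eassumption]; lra).
Qed.

Lemma iter_radial_laplacian_cosh F l : (forall x, 0 < x -> F x = eval_u l (cosh x)) ->
  forall j t, 0 < t ->
  Nat.iter j (radial_laplacian m1p m1m m2p m2m) F t = eval_u (Nat.iter j laplacian_u l) (cosh t).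
Proof.
  intros HF j. induction j as [|j IH]; intros t Ht; [apply HF, Ht|].
  apply radial_laplacian_cosh; assumption.
Qed.

End RadialLaplacian.

Definition mono_t (m : mono) (t : R) : R :=
  mcoef m * sinh t ^ mpow m * Rpower (cosh t) (mexp m).

Notation eval_t := (eval_sum mono_t).

Definition deriv_t_mono (m : mono) : list mono :=
  Mono (mcoef m * INR (mpow m)) (mexp m + 1) (pred (mpow m)) ::
  Mono (mcoef m * mexp m) (mexp m - 1) (S (mpow m)) :: nil.

Lemma is_derive_mono_t m t : is_derive (mono_t m) t (eval_t (deriv_t_mono m) t).
Proof.
  destruct m as [c a q]. unfold mono_t, deriv_t_mono, Rpower; cbn [eval_sum mcoef mexp mpow].
  assert (Hc := cosh_pos t).
  auto_derive; [lra|].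
  replace ((a + 1) * ln (cosh t)) with (a * ln (cosh t) + ln (cosh t)) by ring.
  replace ((a - 1) * ln (cosh t)) with (a * ln (cosh t) + - ln (cosh t)) by ring.
  rewrite !exp_plus, exp_Ropp, exp_ln by lra.
  simpl pow. field. lra.
Qed.

Lemma ex_derive_n_eval_t l n t : ex_derive_n (eval_t l) n t.
Proof. apply (ex_derive_n_eval_sum mono_t deriv_t_mono), is_derive_mono_t. Qed.

Lemma eval_t_pow0 l t : List.Forall (fun m => mpow m = 0%nat) l ->
  eval_t l t = eval_u l (cosh t).
Proof.
  induction 1 as [|m l Hm Hl IH]; [reflexivity|].
  cbn [eval_sum]. rewrite IH. unfold mono_t, mono_u. rewrite Hm. simpl. field.
Qed.

Definition scaled_poly_terms (s : R) (b : nat -> R) (K : nat) : list mono :=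
  map (fun j => Mono (Rpower 2 (- s) * b j) (- s - 2 * INR j) 0) (seq 0 (S K)).

Lemma eval_scaled_poly_terms s b K u : 0 < u ->
  eval_u (scaled_poly_terms s b K) u = Rpower (2 * u) (- s) * sum_n (fun j => b j * (/ u ^ 2) ^ j) K.
Proof.
  intros Hu. unfold scaled_poly_terms.
  assert (Hj : forall j, Rpower u (- s - 2 * INR j) = Rpower u (- s) * (/ u ^ 2) ^ j).
  { intros j. unfold Rminus. rewrite Rpower_plus, !Rpower_Ropp.
    replace (2 * INR j) with (INR (2 * j)) by (rewrite mult_INR; simpl; ring).
    rewrite Rpower_pow, pow_inv, pow_mult by exact Hu. reflexivity. }
  rewrite <- Rpower_mult_distr by lra.
  induction K as [|K IH].
  - rewrite sum_O. cbn [seq map eval_sum]. unfold mono_u; cbn [mcoef mexp mpow].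
    rewrite Hj. simpl. field.
  - rewrite sum_Sn, seq_S, map_app, eval_sum_app, IH. cbn [map eval_sum].
    unfold mono_u; cbn [mcoef mexp mpow]. rewrite Hj, Nat.add_0_l, pow_O. change plus with Rplus. field.
Qed.

Lemma weight_le_scaled_poly_terms s b K : weight_le (- s) (scaled_poly_terms s b K).
Proof.
  apply List.Forall_map, List.Forall_forall. intros j _.
  unfold weight; cbn [mexp mpow]. simpl INR. generalize (pos_INR j). lra.
Qed.

Lemma scaled_poly_terms_pow0 s b K :
  List.Forall (fun m => mpow m = 0%nat) (scaled_poly_terms s b K).
Proof. apply List.Forall_map, List.Forall_forall. reflexivity. Qed.

Definition decay_rate (m1p m1m m2p m2m k : nat) : R :=
  lam m1p m1m m2p m2m k + rho m1p m1m m2p m2m.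

Section Phi0.
Variables m1p m1m m2p m2m k : nat.

Local Notation Phi := (Phi0 m1p m1m m2p m2m k).
Local Notation rate := (decay_rate m1p m1m m2p m2m k).

Definition Phi0_coef : nat -> R :=
  let l := lam m1p m1m m2p m2m k in
  hyp_coef ((rho m1p m1m m2p m2m + l) / 2) (- INR k) (1 + l).

Definition Phi0_terms : list mono := scaled_poly_terms rate Phi0_coef k.

Lemma Phi0_poly t :
  Phi t = Rpower (2 * cosh t) (- rate) * sum_n (fun j => Phi0_coef j * (/ cosh t ^ 2) ^ j) k.
Proof.
  unfold Phi0, Phi0_coef, decay_rate. cbv zeta. rewrite hyp2F1_terminating.
  f_equal. f_equal. ring.
Qed.

Lemma Phi0_eval_u t : Phi t = eval_u Phi0_terms (cosh t).
Proof. unfold Phi0_terms. rewrite Phi0_poly, eval_scaled_poly_terms by apply cosh_pos. reflexivity. Qed.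

Lemma Phi0_smooth m t : ex_derive_n Phi m t.
Proof.
  apply (ex_derive_n_ext (eval_t Phi0_terms)); [|apply ex_derive_n_eval_t].
  intros s. rewrite Phi0_eval_u. apply eval_t_pow0, scaled_poly_terms_pow0.
Qed.

Hypothesis rate_ge0 : 0 <= rate.

Lemma Phi0_laplacian_decay j : exists M, 0 <= M /\ forall t, 0 < t ->
  Rabs (Nat.iter j (radial_laplacian m1p m1m m2p m2m) Phi t) <= M * exp (- rate * t).
Proof.
  set (lj := Nat.iter j (laplacian_u m1p m1m m2p m2m) Phi0_terms).
  assert (Hw : weight_le (- rate) lj).
  { unfold lj. induction j as [|j IH]; [apply weight_le_scaled_poly_terms|].
    apply weight_le_laplacian_u, IH. }
  exists (sum_abs_coef lj * Rpower 2 rate). split.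
  { apply Rmult_le_pos; [apply sum_abs_coef_nonneg | left; apply exp_pos]. }
  intros t Ht.
  rewrite (iter_radial_laplacian_cosh _ _ _ _ _ Phi0_terms) by (intros; apply Phi0_eval_u || lra).
  fold lj. eapply Rle_trans; [apply eval_u_abs_le; [apply cosh_ge_1 | exact Hw]|].
  rewrite Rmult_assoc. apply Rmult_le_compat_l; [apply sum_abs_coef_nonneg|].
  apply Rpower_cosh_neg_le, rate_ge0.
Qed.

Lemma Phi0_ge_exp : exists c T, 0 < c /\ forall t, T <= t -> c * exp (- rate * t) <= Phi t.
Proof.
  set (B := sum_n (fun j => Rabs (Phi0_coef j)) k).
  assert (HB : 0 <= B) by apply sum_n_Rabs_nonneg.
  assert (H2 : 0 < Rpower 2 (- rate)) by apply exp_pos.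
  exists (Rpower 2 (- rate) / 2), (2 * (2 * B + 2)). split; [lra|].
  intros t Ht.
  set (y := / cosh t ^ 2).
  assert (Hy0 : 0 <= y) by (left; apply Rinv_0_lt_compat, pow_lt, cosh_pos).
  assert (Hy : y <= / (2 * B + 2)).
  { apply Rle_trans with (2 / (1 + t)); [apply inv_cosh_sq_le; lra|].
    replace (2 / (1 + t)) with (/ ((1 + t) / 2)) by (field; lra).
    apply Rinv_le_contravar; lra. }
  assert (HP : 1 / 2 <= sum_n (fun j => Phi0_coef j * y ^ j) k)
    by (apply poly_ge_half; [apply hyp_coef_0 | exact Hy0 | exact Hy]).
  assert (Hpow : Rpower 2 (- rate) * exp (- rate * t) <= Rpower (2 * cosh t) (- rate)).
  { rewrite <- Rpower_mult_distr by (lra || apply cosh_pos).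
    apply Rmult_le_compat_l; [lra|]. apply Rpower_cosh_neg_ge; lra. }
  rewrite Phi0_poly. fold y.
  assert (0 < exp (- rate * t)) by apply exp_pos.
  apply Rle_trans with (Rpower 2 (- rate) * exp (- rate * t) * (1 / 2)); [lra|].
  apply Rmult_le_compat; [nra | lra | exact Hpow | exact HP].
Qed.

End Phi0.

Lemma rate_gt_of_weighted_bound (f : R -> R) a s c T C : 0 < c ->
  (forall t, T <= t -> c * exp (- s * t) <= f t) ->
  (forall t, 0 < t -> (1 + t) ^ 1 * exp (a * t) * Rabs (f t) <= C) ->
  a < s.
Proof.
  intros Hc Hlow Hbound.
  destruct (Rlt_or_le a s) as [Has | Hsa]; [exact Has | exfalso].
  set (t := Rmax T 0 + Rabs C / c + 1).
  assert (HT : T <= t /\ 0 < t).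
  { assert (0 <= Rabs C / c) by (apply Rdiv_le_0_compat; [apply Rabs_pos | lra]).
    generalize (Rmax_l T 0) (Rmax_r T 0). unfold t. lra. }
  assert (HC : Rabs C < (1 + t) * c).
  { replace (Rabs C) with (Rabs C / c * c) by (field; lra).
    apply Rmult_lt_compat_r; [exact Hc|]. generalize (Rmax_r T 0). unfold t. lra. }
  assert (Hgrow : 1 <= exp (a * t) * exp (- s * t)).
  { rewrite <- exp_plus, <- exp_0. apply exp_le_compat. nra. }
  specialize (Hlow t (proj1 HT)). specialize (Hbound t (proj2 HT)).
  assert (Hf : c * exp (- s * t) <= Rabs (f t)) by (eapply Rle_trans; [exact Hlow | apply Rle_abs]).
  assert (0 < exp (a * t)) by apply exp_pos.
  assert (Hc1 : c <= exp (a * t) * Rabs (f t)).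
  { apply Rle_trans with (exp (a * t) * (c * exp (- s * t))); [nra|].
    apply Rmult_le_compat_l; lra. }
  rewrite pow_1, Rmult_assoc in Hbound.
  assert ((1 + t) * c <= (1 + t) * (exp (a * t) * Rabs (f t))) by (apply Rmult_le_compat_l; lra).
  generalize (Rle_abs C). lra.
Qed.

Lemma weighted_bound_of_exp_decay (f : R -> R) a s M n : a < s -> 0 <= M ->
  (forall t, 0 < t -> Rabs (f t) <= M * exp (- s * t)) ->
  exists C, forall t, 0 < t -> (1 + t) ^ n * exp (a * t) * Rabs (f t) <= C.
Proof.
  intros Has HM Hf.
  destruct (pow_mul_exp_neg_bounded n (s - a)) as [N HN]; [lra|].
  exists (M * N). intros t Ht.
  assert (Hn : 0 <= (1 + t) ^ n) by (apply pow_le; lra).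
  assert (Ha : 0 < exp (a * t)) by apply exp_pos.
  apply Rle_trans with ((1 + t) ^ n * exp (a * t) * (M * exp (- s * t))).
  - apply Rmult_le_compat_l; [nra | apply Hf, Ht].
  - assert (E : exp (a * t) * exp (- s * t) = exp (- (s - a) * t))
      by (rewrite <- exp_plus; f_equal; ring).
    replace ((1 + t) ^ n * exp (a * t) * (M * exp (- s * t)))
      with (M * ((1 + t) ^ n * (exp (a * t) * exp (- s * t)))) by ring.
    rewrite E. apply Rmult_le_compat_l; [exact HM | apply HN; lra].
Qed.

Theorem lemma3p2 (m1p m1m m2p m2m k : nat) (r : R) :
  0 < r <= 2 ->
  in_L m1p m1m m2p m2m (lam m1p m1m m2p m2m k) ->
  (in_CrK m1p m1m m2p m2m r (Phi0 m1p m1m m2p m2m k) <->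
   in_Lrc m1p m1m m2p m2m r (lam m1p m1m m2p m2m k)).
Proof.
  intros _ HL.
  assert (Hrate : 0 <= decay_rate m1p m1m m2p m2m k).
  { destruct HL as (k' & _ & Hpos). unfold decay_rate, rho in *.
    generalize (pos_INR m1p) (pos_INR m1m) (pos_INR m2p) (pos_INR m2m). lra. }
  assert (HLrc : in_Lrc m1p m1m m2p m2m r (lam m1p m1m m2p m2m k) <->
                 2 / r * rho m1p m1m m2p m2m < decay_rate m1p m1m m2p m2m k).
  { unfold in_Lrc, gam, decay_rate. split; [intros [_ H]; lra | intros H; split; [exact HL | lra]]. }
  rewrite HLrc. split.
  - intros [_ Hbound].
    destruct (Phi0_ge_exp m1p m1m m2p m2m k Hrate) as (c & T & Hc & Hlow).
    destruct (Hbound 0%nat 1%nat) as [C HC].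
    exact (rate_gt_of_weighted_bound _ _ _ _ _ _ Hc Hlow HC).
  - intros Hlt. split; [apply Phi0_smooth|]. intros j n.
    destruct (Phi0_laplacian_decay m1p m1m m2p m2m k Hrate j) as (M & HM & Hdecay).
    exact (weighted_bound_of_exp_decay _ _ _ _ n Hlt HM Hdecay).
Qed.
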